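(* Let $A$ be an abelian surface over a finite field $\mathbb{F}_q$ of characteristic $p$, with Frobenius characteristic polynomial $\chi_{A,q}(T) = T^4 + a_1 T^3 + a_2 T^2 + a_1 q T + q^2$. Let $\ell \neq p$ be a prime, let $r$ be the order of the Frobenius endomorphism $\varphi$ on $A[\ell]$, and assume $\gcd(\ell, r) = 1$. Then there exist $r$-th roots of unity $\zeta_1,\zeta_2 \in \overline{\mathbb{F}}_\ell$ with $\operatorname{lcm}(\operatorname{ord}(\zeta_1),\operatorname{ord}(\zeta_2)) = r$ if $r$ is odd, and $\operatorname{lcm}(\operatorname{ord}(\zeta_1),\operatorname{ord}(\zeta_2)) \in \{r, r/2\}$ if $r$ is even, such that, with $\eta_j = \zeta_j + \zeta_j^{-1} + 2$ ($j=1,2$), $$a_1^2 \equiv (\sqrt{\eta_1} \pm \sqrt{\eta_2})^2\, q \pmod{\ell} \quad\text{and}\quad (a_2 - 2q)^2 \equiv \eta_1 \eta_2 q^2 \pmod{\ell},$$ where the first congruence means that there exist square roots $u_1, u_2 \in \overline{\mathbb{F}}_\ell$ of $\eta_1, \eta_2$ respectively with $a_1^2 \equiv (u_1 + u_2)^2 q$.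
   Context: The order of $\varphi$ on $A[\ell]$ is defined as follows: via $A[\ell] \cong (\mathbb{Z}/\ell\mathbb{Z})^{4}$, the action of $\varphi$ on $A[\ell]$ is given by a matrix $F_\ell \in \operatorname{GL}_{4}(\mathbb{F}_\ell)$ (the reduction mod $\ell$ of the matrix of Frobenius on the Tate module), and $r$ is the smallest positive integer such that $F_\ell^r = \alpha I$ for some scalar $\alpha \in \mathbb{F}_\ell$, i.e. the order of $F_\ell$ in $\operatorname{PGL}_4(\mathbb{F}_\ell)$. Congruences between integers and elements of $\overline{\mathbb{F}}_\ell$ are understood after reducing the integers modulo $\ell$. *)

From HB Require Import structures.
From mathcomp Require Import all_boot all_order all_algebra.
Set Implicit Arguments. Unset Strict Implicit. Unset Printing Implicit Defensive.
Import Order.TTheory GRing.Theory Num.Theory.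
Local Open Scope ring_scope.

Definition pgl_order (K : fieldType) (n : nat) (F : 'M[K]_n) (r : nat) : Prop :=
  (0 < r)%N /\ is_scalar_mx (F ^+ r) /\
  (forall k : nat, (0 < k)%N -> (k < r)%N -> ~~ is_scalar_mx (F ^+ k)).

Definition frob_charpoly (K : nzRingType) (a1 a2 : int) (q : nat) : {poly K} :=
  'X^4 + (a1%:~R)%:P * 'X^3 + (a2%:~R)%:P * 'X^2
  + (a1%:~R * q%:R)%:P * 'X + ((q ^ 2)%:R)%:P.

Definition eta_of (K : unitRingType) (z : K) : K := z + z^-1 + 2.

(* The eigenvalues of Frobenius on A[l] come in pairs (x, q/x): the
   Frobenius polynomial is (T^2 - s1 T + q)(T^2 - s2 T + q) with
   s1 + s2 = -a1 and s1 s2 = a2 - 2q.  For a pair (x, y) the ratio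
   zeta = x/y is an r-th root of unity since F^r is scalar, and
   eta = zeta + zeta^-1 + 2 = (x + y)^2 / q = s^2 / q, which gives both
   congruences.  Conversely, if m is the lcm of the orders of zeta1 and zeta2,
   every eigenvalue satisfies mu^(2m) = q^m; as r is prime to l, a suitable
   scaling of F is semisimple, so F^(2m) is scalar and r <= 2m.  Together with
   m | r this forces m = r or m = r/2, the latter only for even r. *)

From HB Require Import structures.
From mathcomp Require Import all_boot all_order all_algebra all_field.
From mathcomp Require Import ring.
Set Implicit Arguments.
Unset Strict Implicit.
Unset Printing Implicit Defensive.
Import GRing.Theory.
Local Open Scope ring_scope.

Lemma closed_exists_nth_root (L : closedFieldType) (n : nat) (c : L) :
  (0 < n)%N -> exists b : L, b ^+ n = c.
Proof.
move=> n_gt0; have /closed_rootP[b] : size ('X^n - c%:P) != 1.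
  by rewrite size_XnsubC // eqSS -lt0n.
by rewrite rootE !hornerE subr_eq0 => /eqP; exists b.
Qed.

Lemma closed_exists_sum_prod (L : closedFieldType) (s c : L) :
  exists x y : L, x + y = s /\ x * y = c.
Proof.
have [x] := @solve_monicpoly L 2 (nth 0 [:: - c; s]) isT.
rewrite !big_ord_recl big_ord0 /= expr0 expr1 mulr1 addr0 => x_root.
exists x, (s - x); split; first by ring.
by rewrite mulrBr -expr2 x_root; ring.
Qed.

Lemma eigenvalue_expr (K : fieldType) n (M : 'M[K]_n) (r : nat) (c mu : K) :
  M ^+ r = c%:M -> eigenvalue M mu -> mu ^+ r = c.
Proof.
move=> Mr /eigenvalueP[v vM v_neq0].
have vMk k : v *m M ^+ k = mu ^+ k *: v.
  elim: k => [|k IHk]; first by rewrite !expr0 mulmx1 scale1r.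
  by rewrite exprSr -mulmxE mulmxA IHk -scalemxAl vM scalerA -exprSr.
move/eqP: (vMk r); rewrite Mr mul_mx_scalar -subr_eq0 -scalerBl scaler_eq0.
by rewrite (negbTE v_neq0) orbF subr_eq0 => /eqP.
Qed.

Lemma horner_mx_separable_eq0 (L : closedFieldType) n (N : 'M[L]_n.+1)
    (g : {poly L}) :
  separable_poly (mxminpoly N) -> (forall z, eigenvalue N z -> root g z) ->
  horner_mx N g = 0.
Proof.
move=> sepN g_eig; apply/mxminpoly_minP.
have [rs defN] := closed_field_poly_normal (mxminpoly N).
rewrite (eqP (mxminpoly_monic N)) scale1r in defN.
have uniq_rs : uniq rs by rewrite -separable_prod_XsubC -defN.
have g_rs : all (root g) rs.
  apply/allP => z z_rs; apply: g_eig.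
  by rewrite eigenvalue_root_min defN root_prod_XsubC.
have [h ->] := uniq_roots_prod_XsubC g_rs (etrans (uniq_rootsE rs) uniq_rs).
by rewrite defN dvdp_mull.
Qed.

Lemma eigenvalueZ (K : fieldType) n (M : 'M[K]_n) (b mu : K) :
  b != 0 -> eigenvalue (b *: M) mu = eigenvalue M (b^-1 * mu).
Proof.
move=> b_neq0; apply/eigenvalueP/eigenvalueP => -[v vM v_neq0]; exists v => //.
  by rewrite -scalerA -vM scalemxAr scalerA mulVf ?scale1r.
by rewrite -scalemxAr vM scalerA mulrA mulfV ?mul1r.
Qed.

(* Scaling M by an r-th root of c^-1 makes it a root of the separable
   polynomial X^r - 1, hence semisimple. *)
Lemma expr_scalar_mx_eigen (L : closedFieldType) n (M : 'M[L]_n.+1)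
    (r e : nat) (c d : L) :
  (0 < r)%N -> r%:R != 0 :> L -> c != 0 -> M ^+ r = c%:M ->
  (forall mu, eigenvalue M mu -> mu ^+ e = d) -> M ^+ e = d%:M.
Proof.
move=> r_gt0 r_neq0 c_neq0 Mr M_eig.
have [b br] := closed_exists_nth_root c r_gt0.
have b_neq0 : b != 0.
  by apply: contraNneq c_neq0 => b0; rewrite -br b0 expr0n gtn_eqF.
pose N := b^-1 *: M.
have sepN : separable_poly (mxminpoly N).
  apply: dvdp_separable (separable_Xn_sub_1 r_neq0); apply/mxminpoly_minP.
  rewrite rmorphB rmorphXn rmorph1 /= horner_mx_X /N exprZn Mr -br.
  by rewrite -scalemx1 scalerA -exprMn mulVf // expr1n scale1r subrr.
have Ne : horner_mx N ('X^e - (d / b ^+ e)%:P) = 0.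
  apply: horner_mx_separable_eq0 => // z; rewrite eigenvalueZ ?invr_eq0 // invrK.
  move/M_eig; rewrite rootE !hornerE exprMn => <-.
  by rewrite mulrC mulKf ?expf_neq0 ?subrr.
rewrite -(scalerKV b_neq0 M) -/N exprZn.
move/eqP: Ne; rewrite rmorphB rmorphXn /= horner_mx_X horner_mx_C subr_eq0.
move=> /eqP ->.
by rewrite -scalemx1 scalerA mulrC mulfVK ?expf_neq0 // scalemx1.
Qed.

Lemma frob_charpoly_split (K : comNzRingType) (a1 a2 : int) (q : nat)
    (s1 s2 : K) :
  a1%:~R = - (s1 + s2) -> a2%:~R - 2 * q%:R = s1 * s2 ->
  frob_charpoly K a1 a2 q
    = ('X^2 - s1%:P * 'X + (q%:R)%:P) * ('X^2 - s2%:P * 'X + (q%:R)%:P).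
Proof.
move=> a1E a2E; rewrite /frob_charpoly a1E -[a2%:~R](subrK (2 * q%:R)) a2E natrX.
rewrite !(polyCM, polyCD, polyCN, polyC_natr).
ring.
Qed.

Lemma quadratic_prod_XsubC (K : comNzRingType) (x y : K) :
  'X^2 - (x + y)%:P * 'X + (x * y)%:P = ('X - x%:P) * ('X - y%:P).
Proof. by rewrite polyCD polyCM; ring. Qed.

Lemma frob_charpoly_paired_roots (L : closedFieldType) a1 a2 q :
  exists x1 y1 x2 y2 : L,
    [/\ x1 * y1 = q%:R, x2 * y2 = q%:R, a1%:~R = - ((x1 + y1) + (x2 + y2)),
        a2%:~R - 2 * q%:R = (x1 + y1) * (x2 + y2) &
        frob_charpoly L a1 a2 q = \prod_(z <- [:: x1; y1; x2; y2]) ('X - z%:P)].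
Proof.
have [s1 [s2 [s12 s1s2]]] :=
  closed_exists_sum_prod (- a1%:~R) (a2%:~R - 2 * q%:R : L).
have [x1 [y1 [s1E xy1]]] := closed_exists_sum_prod s1 q%:R.
have [x2 [y2 [s2E xy2]]] := closed_exists_sum_prod s2 q%:R.
subst s1 s2.
have a1E : a1%:~R = - ((x1 + y1) + (x2 + y2)) :> L by rewrite s12 opprK.
exists x1, y1, x2, y2; split => //; rewrite (frob_charpoly_split a1E (esym s1s2)).
rewrite -{1}xy1 -xy2 !quadratic_prod_XsubC.
by rewrite !big_cons big_nil mulr1 !mulrA.
Qed.

Lemma eta_of_ratio (K : fieldType) (x y : K) :
  x * y != 0 -> eta_of (x / y) = (x + y) ^+ 2 / (x * y).
Proof.
rewrite mulf_eq0 negb_or => /andP[x_neq0 y_neq0].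
by rewrite /eta_of; field; rewrite x_neq0 y_neq0.
Qed.

Lemma expr_double_ratio (K : fieldType) (x y : K) (m : nat) :
  y != 0 -> (x / y) ^+ m = 1 ->
  x ^+ (2 * m) = (x * y) ^+ m /\ y ^+ (2 * m) = (x * y) ^+ m.
Proof.
move=> y_neq0; rewrite -{2 3 4}(divfK y_neq0 x); move: (x / y) => z zm.
by rewrite mul2n -addnn !exprD !exprMn zm !mul1r.
Qed.

Lemma dvdn_half_leq (m r : nat) :
  (0 < r)%N -> (m %| r)%N -> (r <= 2 * m)%N ->
  if odd r then m = r else m = r \/ m = r./2.
Proof.
move=> r_gt0 /dvdnP[c rE] r_le.
have m_gt0 : (0 < m)%N by move: r_gt0; rewrite rE muln_gt0 => /andP[].
have c_le2 : (c <= 2)%N by rewrite -(leq_pmul2r m_gt0) -rE.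
move: r_gt0; rewrite {}rE; case: c c_le2 => [|[|[|//]]] _.
- by rewrite mul0n.
- by rewrite mul1n; case: ifP => _; [|left].
- by rewrite oddM /= mul2n doubleK; right.
Qed.

Lemma pgl_order_leq (K : fieldType) n (F : 'M[K]_n) (r k : nat) :
  pgl_order F r -> (0 < k)%N -> is_scalar_mx (F ^+ k) -> (r <= k)%N.
Proof.
case=> _ [_ r_min] k_gt0 Fk; rewrite leqNgt; apply/negP.
by move=> /(r_min k k_gt0); rewrite Fk.
Qed.

Lemma pgl_order_map_mx (K R : fieldType) (f : {rmorphism K -> R}) n
    (F : 'M[K]_n.+1) (r : nat) :
  pgl_order (map_mx f F) r <-> pgl_order F r.
Proof.
have scalarE k : is_scalar_mx (map_mx f F ^+ k) = is_scalar_mx (F ^+ k).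
  by rewrite -rmorphXn map_mx_is_scalar.
split=> -[r_gt0 [Fr F_min]]; split=> //; split=> [|k k_gt0 k_lt].
- by rewrite -scalarE.
- by rewrite -scalarE F_min.
- by rewrite scalarE.
- by rewrite scalarE F_min.
Qed.

Definition pchar_embedding (p : nat) (R : nzRingType) (pR : p \in [pchar R]) :
  'F_p -> R := in_alg (pPrimeCharType pR).

Section PcharEmbedding.
Variables (p : nat) (R : nzRingType) (pR : p \in [pchar R]).

Lemma pchar_embedding_is_zmod_morphism : zmod_morphism (pchar_embedding pR).
Proof. by move=> x y; rewrite /pchar_embedding rmorphB. Qed.

Lemma pchar_embedding_is_monoid_morphism :
  monoid_morphism (pchar_embedding pR).
Proof. by split=> [|x y]; rewrite /pchar_embedding ?rmorph1 ?rmorphM. Qed.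

HB.instance Definition _ := GRing.isZmodMorphism.Build _ _ (pchar_embedding pR)
  pchar_embedding_is_zmod_morphism.
HB.instance Definition _ := GRing.isMonoidMorphism.Build _ _ (pchar_embedding pR)
  pchar_embedding_is_monoid_morphism.

End PcharEmbedding.

Lemma map_frob_charpoly (K R : nzRingType) (f : {rmorphism K -> R}) a1 a2 q :
  map_poly f (frob_charpoly K a1 a2 q) = frob_charpoly R a1 a2 q.
Proof.
rewrite /frob_charpoly !mul_polyC !rmorphD /= !map_polyZ !map_polyXn map_polyX.
by rewrite map_polyC /= !rmorph_int rmorphM /= !rmorph_nat rmorph_int.
Qed.

Section PairedSpectrum.
Variables (L : closedFieldType) (M : 'M[L]_4) (r : nat) (Q x1 y1 x2 y2 : L).
Hypotheses (M_order : pgl_order M r) (r_neq0 : r%:R != 0 :> L).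
Hypotheses (xy1 : x1 * y1 = Q) (xy2 : x2 * y2 = Q) (Q_neq0 : Q != 0).
Hypothesis charM : char_poly M = \prod_(z <- [:: x1; y1; x2; y2]) ('X - z%:P).

Let r_gt0 : (0 < r)%N. Proof. by case: M_order. Qed.

Let c := (M ^+ r) ord0 ord0.

Let Mr : M ^+ r = c%:M.
Proof.
by rewrite /c; case: M_order => _ [/is_scalar_mxP[a ->] _]; rewrite mxE eqxx.
Qed.

Let eigenvalueM mu : eigenvalue M mu = (mu \in [:: x1; y1; x2; y2]).
Proof. by rewrite eigenvalue_root_char charM root_prod_XsubC. Qed.

Let pair_neq0 x y : x * y = Q -> x != 0 /\ y != 0.
Proof. by move=> xyQ; apply/andP; rewrite -negb_or -mulf_eq0 xyQ. Qed.

Let eigenvalue_expr_r mu : mu \in [:: x1; y1; x2; y2] -> mu ^+ r = c.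
Proof. by rewrite -eigenvalueM; apply: eigenvalue_expr Mr. Qed.

Let c_neq0 : c != 0.
Proof.
have [x1_neq0 _] := pair_neq0 xy1.
by rewrite -(eigenvalue_expr_r (mu := x1)) ?inE ?eqxx ?expf_neq0.
Qed.

Lemma paired_ratio_expr_eq1 : (x1 / y1) ^+ r = 1 /\ (x2 / y2) ^+ r = 1.
Proof.
by rewrite !exprMn !exprVn !eigenvalue_expr_r ?inE ?eqxx ?orbT // mulfV.
Qed.

Lemma paired_expr_scalar m :
  (x1 / y1) ^+ m = 1 -> (x2 / y2) ^+ m = 1 -> M ^+ (2 * m) = (Q ^+ m)%:M.
Proof.
move=> z1m z2m.
have [_ y1_neq0] := pair_neq0 xy1; have [_ y2_neq0] := pair_neq0 xy2.
have [x1E y1E] := expr_double_ratio y1_neq0 z1m.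
have [x2E y2E] := expr_double_ratio y2_neq0 z2m.
apply: (expr_scalar_mx_eigen r_gt0 r_neq0 c_neq0 Mr) => mu.
rewrite eigenvalueM !inE => /or4P[] /eqP->.
- by rewrite x1E xy1.
- by rewrite y1E xy1.
- by rewrite x2E xy2.
- by rewrite y2E xy2.
Qed.

Lemma paired_lcm_order n1 n2 :
  n1.-primitive_root (x1 / y1) -> n2.-primitive_root (x2 / y2) ->
  if odd r then lcmn n1 n2 = r else lcmn n1 n2 = r \/ lcmn n1 n2 = r./2.
Proof.
move=> z1_prim z2_prim; have [z1r z2r] := paired_ratio_expr_eq1.
apply: dvdn_half_leq => //.
  rewrite dvdn_lcm (prim_order_dvd z1_prim) (prim_order_dvd z2_prim).
  by rewrite z1r z2r eqxx.
apply: (pgl_order_leq M_order).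
  by rewrite muln_gt0 lcmn_gt0 (prim_order_gt0 z1_prim) (prim_order_gt0 z2_prim).
rewrite paired_expr_scalar ?scalar_mx_is_scalar //; apply/eqP.
  by rewrite -(prim_order_dvd z1_prim) dvdn_lcml.
by rewrite -(prim_order_dvd z2_prim) dvdn_lcmr.
Qed.

End PairedSpectrum.

Theorem proposition2
  (p k : nat) (q : nat) (a1 a2 : int) (l : nat) (r : nat)
  (Hp : prime p) (Hk : (0 < k)%N) (Hq : q = (p ^ k)%N)
  (Hl : prime l) (Hlp : l != p)
  (F : 'M['F_l]_4)
  (HF : char_poly F = frob_charpoly 'F_l a1 a2 q)
  (Hr : pgl_order F r)
  (Hcop : coprime l r)
  (L : closedFieldType) (HL : l \in [pchar L]) :
  exists (z1 z2 : L) (n1 n2 : nat),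
    [/\ z1 ^+ r = 1 /\ z2 ^+ r = 1,
        n1.-primitive_root z1 /\ n2.-primitive_root z2,
        (if odd r then lcmn n1 n2 = r
         else lcmn n1 n2 = r \/ lcmn n1 n2 = r./2),
        (exists u1 u2 : L,
           [/\ u1 ^+ 2 = eta_of z1, u2 ^+ 2 = eta_of z2 &
                (a1%:~R) ^+ 2 = (u1 + u2) ^+ 2 * q%:R]) &
        (a2%:~R - 2 * q%:R) ^+ 2 = eta_of z1 * eta_of z2 * (q%:R) ^+ 2].
Proof.
pose M := map_mx (pchar_embedding HL) F.
have M_order : pgl_order M r by apply/pgl_order_map_mx.
have q_neq0 : q%:R != 0 :> L.
  by rewrite Hq natrX expf_neq0 // -(dvdn_pcharf HL) dvdn_prime2.
have r_neq0 : r%:R != 0 :> L by rewrite -(dvdn_pcharf HL) -prime_coprime.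
have [x1 [y1 [x2 [y2 [xy1 xy2 a1E a2E charL]]]]] :=
  frob_charpoly_paired_roots L a1 a2 q.
have charM : char_poly M = \prod_(z <- [:: x1; y1; x2; y2]) ('X - z%:P).
  by rewrite -map_char_poly HF map_frob_charpoly.
have [z1r z2r] := paired_ratio_expr_eq1 M_order xy1 q_neq0 charM.
have [n1 z1_prim _] := prim_order_exists (proj1 M_order) z1r.
have [n2 z2_prim _] := prim_order_exists (proj1 M_order) z2r.
exists (x1 / y1), (x2 / y2), n1, n2; split => //.
- exact: (paired_lcm_order M_order r_neq0 xy1 xy2 q_neq0 charM).
- have [w w2] := closed_exists_nth_root (q%:R : L) (isT : (0 < 2)%N).
  have w_neq0 : w != 0 by apply: contraNneq q_neq0 => w0; rewrite -w2 w0 expr0n.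
  exists ((x1 + y1) / w), ((x2 + y2) / w).
  by rewrite !eta_of_ratio ?xy1 ?xy2 // -w2 !expr_div_n a1E; split=> //; field.
- by rewrite !eta_of_ratio ?xy1 ?xy2 // a2E; field.
Qed.
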